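(* Let $\Delta$ be a thick spherical building with a chosen point $n\in\Delta$, let $\sigma$ be a simplex of $\Delta$ and $C$ a chamber containing $\sigma$. Then $\sigma$ lies in the horizontal part $\Delta^h$ if and only if every vertex $v$ of $C$ for which there is a path in the Coxeter diagram of $\Delta$ from the type of $v$ to the type of some vertex of $\sigma$ is equatorial.
   Context: $\Delta$ carries the CAT(1) angular metric $d$ (apartments are unit spheres). A point $x$ is equatorial if $d(n,x)=\pi/2$; a simplex is equatorial if all its points are. $\Delta$ decomposes as a spherical join $\ast_i\Delta_i$ of irreducible spherical buildings; the horizontal part $\Delta^h$ is the join of those factors $\Delta_i$ consisting entirely of equatorial points, and the vertical part $\Delta^v$ is the join of the remaining factors. Paths in the Coxeter diagram include the trivial path. *)

From mathcomp Require Import all_boot all_order all_algebra.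
From mathcomp Require Import all_classical all_reals all_analysis.
Import GRing.Theory Num.Theory.
Local Open Scope ring_scope.

(* A spherical building is encoded as a W-metric building (Abramenko-Brown,
   Def. 5.1) over a Coxeter system (W,S), S = 'I_r, where W is realized by its
   (faithful) Tits geometric representation on V = R^r with the bilinear form
   B(e_s,e_t) = -cos(pi/m_st).  A bpoint of the CAT(1) realization is a pair
   (c, x) with c a chamber and x a B-unit vector in the closed fundamental
   chamber K = {x | B(e_s,x) >= 0}.  The angular metric between (c,x) and
   (d,y) is acos B(x, delta(c,d) y) (computed in an apartment containing c,d). *)

Section Coxeter.
Variables (R : realType) (r : nat) (m : 'I_r -> 'I_r -> nat).

Definition coxeter_matrix : Prop :=
  [/\ forall s, m s s = 1%N,
      forall s t, m s t = m t s &
      forall s t, s != t -> (2 <= m s t)%N].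

Definition cox_form : 'M[R]_r := \matrix_(s, t) - cos (pi / (m s t)%:R).

Definition bil (x y : 'cV[R]_r) : R := (x^T *m cox_form *m y) 0 0.

Definition ebase (s : 'I_r) : 'cV[R]_r := delta_mx s 0.

Definition refl (s : 'I_r) : 'M[R]_r :=
  1%:M - 2%:R *: (ebase s *m row s cox_form).

Definition wprod (w : seq 'I_r) : 'M[R]_r :=
  foldr (fun s M => refl s *m M) 1%:M w.

Definition in_W (M : 'M[R]_r) : Prop := exists w, wprod w = M.

Definition W_finite : Prop := exists L : seq 'M[R]_r, forall w, wprod w \in L.

Definition is_length (M : 'M[R]_r) (n : nat) : Prop :=
  (exists w, size w = n /\ wprod w = M) /\
  (forall w, wprod w = M -> (n <= size w)%N).

(* Coxeter diagram: edge s -- t iff m_st >= 3; paths include trivial path *)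
Definition cox_adj : rel 'I_r := fun s t => (3 <= m s t)%N.
Definition cox_path (s t : 'I_r) : bool := connect cox_adj s t.

Section Building.
Variables (Ch : Type) (delta : Ch -> Ch -> 'M[R]_r).

Definition is_W_building : Prop :=
  [/\ forall c d, in_W (delta c d),
      forall c d, delta c d = 1%:M <-> c = d,
      forall c c' d s, delta c' c = refl s ->
         (delta c' d = refl s *m delta c d \/ delta c' d = delta c d) /\
         (forall n, is_length (delta c d) n ->
                    is_length (refl s *m delta c d) n.+1 ->
                    delta c' d = refl s *m delta c d) &
      forall c d s, exists c', delta c' c = refl s /\
                               delta c' d = refl s *m delta c d].

(* every panel contains at least three chambers *)
Definition thick : Prop :=
  forall c s, exists c1 c2, c1 <> c2 /\ delta c c1 = refl s /\ delta c c2 = refl s.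

Definition in_chamber (x : 'cV[R]_r) : Prop :=
  (forall s, 0 <= bil (ebase s) x) /\ bil x x = 1.

Definition bpoint := (Ch * 'cV[R]_r)%type.

Definition ang_dist (p q : bpoint) : R := acos (bil p.2 (delta p.1 q.1 *m q.2)).

Definition equatorial (n p : bpoint) : Prop := ang_dist n p = pi / 2.

Definition supp_in (x : 'cV[R]_r) (P : 'I_r -> Prop) : Prop :=
  forall s, bil (ebase s) x != 0 -> P s.

(* the irreducible factor containing type t consists entirely of equatorial points *)
Definition horiz_factor (n : bpoint) (t : 'I_r) : Prop :=
  forall c x, in_chamber x -> supp_in x (fun s => cox_path t s) ->
    equatorial n (c, x).

(* membership in the horizontal part Delta^h (join of the horizontal factors) *)
Definition in_horizontal (n : bpoint) (p : bpoint) : Prop :=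
  supp_in p.2 (horiz_factor n).

(* the face sigma of type J of chamber c lies in Delta^h *)
Definition face_in_horizontal (n : bpoint) (c : Ch) (J : {set 'I_r}) : Prop :=
  forall x, in_chamber x -> supp_in x (fun s => s \in J) -> in_horizontal n (c, x).

(* x represents the vertex of type s of the fundamental chamber *)
Definition vertex_of_type (s : 'I_r) (x : 'cV[R]_r) : Prop :=
  in_chamber x /\ forall t, t != s -> bil (ebase t) x = 0.

End Building.
End Coxeter.

Arguments coxeter_matrix {r}.
Arguments W_finite R {r}.
Arguments cox_path {r}.
Arguments is_W_building {R r} m {Ch}.
Arguments thick {R r} m {Ch}.
Arguments in_chamber {R r} m.
Arguments face_in_horizontal {R r} m {Ch}.
Arguments vertex_of_type {R r} m.
Arguments equatorial {R r} m {Ch}.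

(* Since W is finite, averaging the standard inner product over W gives a
   W-invariant positive form Q; invariance under each reflection forces Q to be
   a positive rescaling of the rows of the Tits form B, so B is positive
   definite.  Hence every type has a vertex in the fundamental chamber, and
   |B(y,z)| <= 1 on unit vectors, so a point is equatorial exactly when its
   W-translate is B-orthogonal to n.  For a component K of the Coxeter diagram
   B is block diagonal, so the coordinate projection P onto K commutes with W.
   If the vertices of C with types in K are equatorial, P annihilates n (moved
   into the apartment of C), so n is B-orthogonal to every point supported on
   K: the factor of K is horizontal.  Conversely, a horizontal face contains a
   vertex of each of its types, whose factor is then horizontal. *)

From mathcomp Require Import all_boot all_order all_algebra.
From mathcomp Require Import all_classical all_reals all_analysis.
From mathcomp Require Import ring lra.
Import Order.TTheory GRing.Theory Num.Theory.
Set Implicit Arguments.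
Unset Strict Implicit.
Unset Printing Implicit Defensive.
Local Open Scope ring_scope.

Lemma cox_path_sym r (m : 'I_r -> 'I_r -> nat) s t :
  coxeter_matrix m -> cox_path m s t = cox_path m t s.
Proof. by case=> _ msym _; apply: sym_connect_sym => a b; rewrite /cox_adj msym. Qed.

Section TitsForm.
Variables (R : realType) (r : nat) (m : 'I_r -> 'I_r -> nat).
Hypothesis coxm : coxeter_matrix m.

Local Notation B := (cox_form R r m).
Local Notation e := (ebase R r).

Lemma trmx_cox_form : B^T = B.
Proof. by case: coxm => _ msym _; apply/matrixP=> i j; rewrite !mxE msym. Qed.

Lemma bil_ebasel s x : bil R r m (e s) x = (B *m x) s 0.
Proof. by rewrite /bil /ebase trmx_delta -mulmxA -rowE mxE. Qed.

Lemma bil_ebaser (z : 'cV[R]_r) (lam : R) u :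
  (z^T *m (lam *: e u)) 0 0 = lam * z u 0.
Proof. by rewrite -scalemxAr /ebase -colE !mxE. Qed.

Lemma bilZ (c : R) x : bil R r m (c *: x) (c *: x) = c ^+ 2 * bil R r m x x.
Proof.
have tZ : (c *: x)^T = c *: x^T by rewrite linearZ.
rewrite /bil tZ -scalemxAl -scalemxAl -scalemxAr !mxE.
by rewrite mulrA expr2.
Qed.

Lemma bil_sym x y : bil R r m x y = bil R r m y x.
Proof.
have tr11 (A : 'M[R]_1) : A 0 0 = A^T 0 0 by rewrite mxE.
by rewrite /bil tr11 2!trmx_mul trmxK trmx_cox_form mulmxA.
Qed.

Lemma bilDl x y z : bil R r m (x + y) z = bil R r m x z + bil R r m y z.
Proof. by rewrite /bil linearD mulmxDl mulmxDl mxE. Qed.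

Lemma bilDr x y z : bil R r m x (y + z) = bil R r m x y + bil R r m x z.
Proof. by rewrite /bil mulmxDr mxE. Qed.

Lemma bilNl x y : bil R r m (- x) y = - bil R r m x y.
Proof. by rewrite /bil linearN !mulNmx mxE. Qed.

Lemma bilNr x y : bil R r m x (- y) = - bil R r m x y.
Proof. by rewrite /bil mulmxN mxE. Qed.

Lemma row_cox_form_ebase s : row s B *m e s = 1%:M.
Proof.
case: coxm => mdiag _ _; rewrite /ebase -colE; apply/matrixP=> i j.
by rewrite !ord1 !mxE mdiag divr1 cospi opprK.
Qed.

Lemma refl_ebase s : refl R r m s *m e s = - e s.
Proof.
rewrite /refl mulmxBl mul1mx -scalemxAl -mulmxA row_cox_form_ebase mulmx1.
by rewrite scaler_nat mulr2n opprD addrA subrr add0r.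
Qed.

Lemma reflK s : refl R r m s *m refl R r m s = 1%:M.
Proof.
set E := e s *m row s B.
have EE : E *m E = E by rewrite mulmxA -(mulmxA (e s)) row_cox_form_ebase mulmx1.
rewrite /refl -/E mulmxBl mul1mx mulmxBr mulmx1 -scalemxAl -scalemxAr scalerA EE.
by rewrite -scalerA !scaler_nat !mulr2n opprB addrK subrK.
Qed.

Lemma refl_isometry s : (refl R r m s)^T *m B *m refl R r m s = B.
Proof.
set b := row s B.
have Be : B *m e s = b^T by rewrite /ebase -colE /b tr_row trmx_cox_form.
have eB : (e s)^T *m B = b by rewrite /ebase trmx_delta -rowE.
have -> : (refl R r m s)^T = 1%:M - 2%:R *: (b^T *m (e s)^T).
  by rewrite /refl linearB /= linearZ /= trmx1 trmx_mul.
rewrite /refl mulmxBl mul1mx -scalemxAl -mulmxA eB.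
rewrite mulmxBr mulmx1 mulmxBl -!scalemxAr -!scalemxAl mulmxA Be.
rewrite -!mulmxA (mulmxA b) row_cox_form_ebase mul1mx.
by rewrite !scaler_nat !mulr2n opprB addrK subrK.
Qed.

Lemma wprod_cat w1 w2 : wprod R r m (w1 ++ w2) = wprod R r m w1 *m wprod R r m w2.
Proof. by elim: w1 => [|s w IH] /=; rewrite ?mul1mx // IH mulmxA. Qed.

Lemma mul_wprod_rev w : wprod R r m (rev w) *m wprod R r m w = 1%:M.
Proof.
elim: w => [|s w IH] /=; first by rewrite mul1mx.
rewrite rev_cons -cats1 wprod_cat /= mulmx1 -mulmxA (mulmxA (refl _ _ _ _)).
by rewrite reflK mul1mx.
Qed.

Lemma in_W_mulr M s : in_W R r m M -> in_W R r m (M *m refl R r m s).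
Proof. by case=> w <-; exists (w ++ [:: s]); rewrite wprod_cat /= mulmx1. Qed.

Lemma in_W_isometry M : in_W R r m M -> M^T *m B *m M = B.
Proof.
case=> w <-; elim: w => [|s w IH] /=; first by rewrite trmx1 mul1mx mulmx1.
rewrite trmx_mul -!mulmxA (mulmxA (refl _ _ _ _)^T) (mulmxA _ _ (wprod _ _ _ _)).
by rewrite refl_isometry mulmxA.
Qed.

Lemma bil_in_W M x y : in_W R r m M -> bil R r m (M *m x) (M *m y) = bil R r m x y.
Proof.
move=> MW; rewrite /bil trmx_mul !mulmxA -(mulmxA x^T M^T) -(mulmxA x^T).
by rewrite in_W_isometry.
Qed.

Lemma invariant_form_row (Q : 'M[R]_r) s t :
  (refl R r m s)^T *m Q *m refl R r m s = Q -> Q s t = Q s s * B s t.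
Proof.
move=> Qinv; set g := refl R r m s; set b := row s B.
have gQ : g^T *m Q = Q *m g by rewrite -{2}Qinv -mulmxA reflK mulmx1.
have eg : (e s)^T *m g^T = - (e s)^T by rewrite -trmx_mul refl_ebase linearN.
have eQe : (e s)^T *m Q *m e s = (Q s s)%:M.
  by rewrite /ebase trmx_delta -rowE -colE; apply/matrixP => i j; rewrite !ord1 !mxE.
have eQg : (e s)^T *m Q *m g = (e s)^T *m Q - 2%:R *: (Q s s *: b).
  by rewrite /g /refl mulmxBr mulmx1 -scalemxAr mulmxA eQe mul_scalar_mx.
have eQN : - ((e s)^T *m Q) = (e s)^T *m Q - 2%:R *: (Q s s *: b).
  by rewrite -eQg -mulmxA -gQ mulmxA eg mulNmx.
have eQ : (e s)^T *m Q = Q s s *: b.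
  apply: (@scalerI _ _ 2%:R); first by rewrite pnatr_eq0.
  by rewrite scaler_nat mulr2n -{1}(opprK ((e s)^T *m Q)) eQN opprB subrK.
have := congr1 (fun A : 'M[R]_(1, r) => A 0 t) eQ.
by rewrite /= /ebase trmx_delta -rowE !mxE.
Qed.

Lemma mulmx_trmx_self_expand (x : 'cV[R]_r) : (x^T *m x) 0 0 = \sum_i x i 0 ^+ 2.
Proof. by rewrite mxE; apply: eq_bigr => i _; rewrite mxE expr2. Qed.

Lemma mulmx_trmx_self_ge0 (x : 'cV[R]_r) : 0 <= (x^T *m x) 0 0.
Proof. by rewrite mulmx_trmx_self_expand; apply: sumr_ge0 => i _; apply: sqr_ge0. Qed.

Lemma mulmx_trmx_self_gt0 (x : 'cV[R]_r) : x != 0 -> 0 < (x^T *m x) 0 0.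
Proof.
move=> x_neq0; have [i xi_neq0] : exists i, x i 0 != 0.
  apply/existsP; apply: contraR x_neq0; rewrite negb_exists => /forallP x0.
  by apply/eqP/matrixP => i j; rewrite ord1 mxE; apply/eqP/negbNE/x0.
rewrite mulmx_trmx_self_expand (bigD1 i) //= ltr_pwDl ?exprn_even_gt0 ?xi_neq0 //.
by apply: sumr_ge0 => j _; apply: sqr_ge0.
Qed.

Section FiniteCoxeterGroup.
Hypothesis finW : W_finite R m.

Lemma W_enum : exists S : seq 'M[R]_r, [/\ uniq S, forall M, M \in S <-> in_W R r m M &
  forall s, perm_eq [seq M *m refl R r m s | M <- S] S].
Proof.
have [L memL] := finW.
set S := [seq M <- undup L | `[< in_W R r m M >]].
have memS M : M \in S <-> in_W R r m M.
  rewrite mem_filter mem_undup; split; first by case/andP => /asboolP.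
  by move=> MW; apply/andP; split; [apply/asboolP | case: MW => w <-].
have uS : uniq S by rewrite filter_uniq // undup_uniq.
exists S; split=> // s; apply: uniq_perm => //.
  rewrite map_inj_uniq // => M1 M2 /(congr1 (mulmx^~ (refl R r m s))).
  by rewrite -!mulmxA reflK !mulmx1.
move=> X; apply/mapP/idP => [[M /memS MW ->] | /memS XW].
  exact/memS/in_W_mulr.
exists (X *m refl R r m s); first exact/memS/in_W_mulr.
by rewrite -mulmxA reflK mulmx1.
Qed.

(* Averaging the standard inner product over the finite group W. *)
Lemma invariant_form_exists : exists Q : 'M[R]_r, [/\ Q^T = Q,
  forall s, (refl R r m s)^T *m Q *m refl R r m s = Q &
  forall x : 'cV[R]_r, (x^T *m x) 0 0 <= (x^T *m Q *m x) 0 0].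
Proof.
have [S [uS memS permS]] := W_enum.
exists (\sum_(M <- S) M^T *m M); split.
- by rewrite linear_sum /=; apply: eq_bigr => M _; rewrite trmx_mul trmxK.
- move=> s; rewrite mulmx_sumr mulmx_suml -[in RHS](perm_big _ (permS s)) big_map.
  by apply: eq_bigr => M _; rewrite trmx_mul !mulmxA.
- move=> x; rewrite mulmx_sumr mulmx_suml summxE.
  have S1 : 1%:M \in S by apply/memS; exists [::].
  rewrite (bigD1_seq _ S1 uS) /= trmx1 !mulmx1 lerDl.
  by apply: sumr_ge0 => M _; rewrite !mulmxA -trmx_mul -mulmxA mulmx_trmx_self_ge0.
Qed.

(* [Q] is [B] with row [i] rescaled by [q i := Q i i], and symmetry makes [q]
   constant on each edge of the support of [B]; hence [B(x,x) = Q(z,z)] for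
   [z i := x i / sqrt (q i)]. *)
Lemma cox_form_posdef x : x != 0 -> 0 < bil R r m x x.
Proof.
move=> x_neq0; have [Q [Qsym Qinv Qge]] := invariant_form_exists.
set q := fun i => Q i i.
have q_gt0 i : 0 < q i.
  apply: (lt_le_trans ltr01); have := Qge (e i).
  by rewrite /ebase trmx_delta mul_delta_mx -rowE -colE !mxE !eqxx.
have QE i j : Q i j = q i * B i j by apply: invariant_form_row.
have q_edge i j : B i j != 0 -> q i = q j.
  move=> Bij; have : (q i - q j) * B i j = 0.
    have Qji : Q j i = Q i j by rewrite -{1}Qsym mxE.
    by rewrite mulrBl -QE -trmx_cox_form mxE -QE Qji subrr.
  by move/eqP; rewrite mulf_eq0 (negbTE Bij) orbF subr_eq0 => /eqP.
pose z := \col_i (x i 0 / Num.sqrt (q i)).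
have z_neq0 : z != 0.
  apply: contra_neq x_neq0 => z0; apply/matrixP => i j; rewrite ord1 mxE.
  have /eqP := congr1 (fun A : 'cV[R]_r => A i 0) z0; rewrite /= !mxE.
  by rewrite mulf_eq0 invr_eq0 sqrtr_eq0 leNgt q_gt0 orbF => /eqP.
have -> : bil R r m x x = (z^T *m Q *m z) 0 0.
  have expand (u v : 'cV[R]_r) (A : 'M[R]_r) :
      (u^T *m A *m v) 0 0 = \sum_i \sum_j u i 0 * A i j * v j 0.
    rewrite mxE exchange_big /=; apply: eq_bigr => j _.
    by rewrite mxE mulr_suml; apply: eq_bigr => i _; rewrite mxE.
  rewrite /bil !expand; apply: eq_bigr => i _; apply: eq_bigr => j _.
  have zE k : z k 0 = x k 0 / Num.sqrt (q k) by rewrite mxE.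
  rewrite !zE QE.
  have [-> | Bij] := eqVneq (B i j) 0; first by rewrite !(mulr0, mul0r).
  rewrite -(q_edge _ _ Bij).
  have sq_neq0 : Num.sqrt (q i) != 0 by rewrite sqrtr_eq0 -ltNge q_gt0.
  have qi_sq : q i = Num.sqrt (q i) ^+ 2 by rewrite sqr_sqrtr // ltW.
  by move: sq_neq0 qi_sq; move: (Num.sqrt (q i)) => sq sq_neq0 ->; field.
by apply: lt_le_trans (Qge z); apply: mulmx_trmx_self_gt0.
Qed.

Lemma cox_form_unit : B \in unitmx.
Proof.
rewrite unitmxE unitfE; apply/negP => /det0P [v v_neq0 vB].
have vT_neq0 : v^T != 0 by apply: contra_neq v_neq0 => v0; rewrite -(trmxK v) v0 trmx0.
by have := cox_form_posdef vT_neq0; rewrite /bil trmxK vB mul0mx mxE ltxx.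
Qed.

Lemma bil_ge0 x : 0 <= bil R r m x x.
Proof.
have [-> | x_neq0] := eqVneq x 0; first by rewrite /bil mulmx0 mxE.
exact/ltW/cox_form_posdef.
Qed.

Lemma bil_unit_bound y z :
  bil R r m y y = 1 -> bil R r m z z = 1 -> -1 <= bil R r m y z <= 1.
Proof.
move=> y1 z1; have := bil_ge0 (y + z); have := bil_ge0 (y - z).
rewrite !(bilDl, bilDr, bilNl, bilNr) (bil_sym z y) y1 z1.
by move=> *; apply/andP; split; lra.
Qed.

Lemma fundamental_vertex_exists t : exists v lam,
  [/\ 0 < lam, B *m v = lam *: e t & vertex_of_type m t v].
Proof.
set u := invmx B *m e t.
have Bu : B *m u = e t by rewrite mulmxA mulmxV ?cox_form_unit // mul1mx.
have u_neq0 : u != 0.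
  apply: contra_eq_neq Bu => ->; rewrite mulmx0; apply/eqP/matrixP => /(_ t 0).
  by rewrite !mxE eqxx /= => /eqP; rewrite eq_sym oner_eq0.
have l_gt0 := cox_form_posdef u_neq0; set l := bil R r m u u in l_gt0.
have sq_gt0 : 0 < Num.sqrt l by rewrite sqrtr_gt0.
exists ((Num.sqrt l)^-1 *: u), (Num.sqrt l)^-1; split.
- by rewrite invr_gt0.
- by rewrite -scalemxAr Bu.
split; first split.
- move=> s; rewrite bil_ebasel -scalemxAr Bu !mxE.
  by apply: mulr_ge0; [rewrite invr_ge0 ltW | case: (s == t)].
- by rewrite bilZ -/l exprVn sqr_sqrtr ?ltW // mulVf // gt_eqF.
- by move=> s st; rewrite bil_ebasel -scalemxAr Bu !mxE (negbTE st) mulr0.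
Qed.
End FiniteCoxeterGroup.

Lemma in_W_unit M : in_W R r m M -> M \in unitmx.
Proof. by case=> w <-; case: (mulmx1_unit (mul_wprod_rev w)). Qed.

Lemma cox_form_cross_component s0 u v :
  cox_path m s0 u != cox_path m s0 v -> B u v = 0.
Proof.
case: (coxm) => _ msym m_ge2 path_neq.
have [uv | uv] := eqVneq u v; first by rewrite uv eqxx in path_neq.
have m_lt3 : ~~ (3 <= m u v)%N.
  apply: (contra _ path_neq) => adj_uv.
  have adj_vu : cox_adj _ m v u by rewrite /cox_adj msym.
  apply/eqP; apply/idP/idP => path_s0; apply: (connect_trans path_s0).
    exact: connect1.
  exact: connect1.
have m2 : m u v = 2%N by apply/eqP; rewrite eqn_leq m_ge2 // andbT -ltnS ltnNge.
by rewrite mxE m2 cos_pihalf oppr0.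
Qed.

Lemma supp_vertex s x (P : 'I_r -> Prop) :
  vertex_of_type m s x -> P s -> supp_in R r m x P.
Proof.
by case=> _ x_supp Ps u; have [-> // | us] := eqVneq u s; rewrite x_supp ?eqxx.
Qed.

Section ComponentProjection.
Variable K : pred 'I_r.
Hypothesis cox_form_block : forall u v, K u != K v -> B u v = 0.

Definition comp_proj : 'M[R]_r := diag_mx (\row_u (K u)%:R).

Lemma trmx_comp_proj : comp_proj^T = comp_proj.
Proof. exact: tr_diag_mx. Qed.

Lemma comp_proj_entry (z : 'cV[R]_r) u : (comp_proj *m z) u 0 = (K u)%:R * z u 0.
Proof. by rewrite mul_diag_mx !mxE. Qed.

Lemma comp_proj_mulmxC (A : 'M[R]_r) :
  (forall u v, K u != K v -> A u v = 0) -> comp_proj *m A = A *m comp_proj.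
Proof.
move=> A_block; apply/matrixP => u v; rewrite mul_diag_mx mul_mx_diag !mxE.
have [-> | Kuv] := eqVneq (K u) (K v); first by rewrite mulrC.
by rewrite A_block // mulr0 mul0r.
Qed.

Lemma comp_proj_refl s : comp_proj *m refl R r m s = refl R r m s *m comp_proj.
Proof.
apply: comp_proj_mulmxC => u v Kuv.
have uv : u != v by apply: contraNneq Kuv => ->.
rewrite /refl; move: B cox_form_block => A A_block.
rewrite !mxE big_ord1 !mxE (negbTE uv) /=.
have [us | us] := eqVneq u s; last by rewrite mul0r mulr0 subr0.
by rewrite -us A_block // !mulr0 subr0.
Qed.

Lemma comp_proj_in_W M : in_W R r m M -> comp_proj *m M = M *m comp_proj.
Proof.
case=> w <-; elim: w => [|s w IH] /=; first by rewrite mulmx1 mul1mx.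
by rewrite mulmxA comp_proj_refl -!mulmxA IH.
Qed.

Hypothesis finW : W_finite R m.

Lemma comp_proj_supp x : supp_in R r m x K -> comp_proj *m x = x.
Proof.
move=> x_supp; apply/eqP; rewrite eq_sym -subr_eq0; apply/eqP.
suff B_diff0 : B *m (x - comp_proj *m x) = 0.
  by rewrite -(mul1mx (_ - _)) -(mulVmx (cox_form_unit finW)) -mulmxA B_diff0 mulmx0.
have Bx_K u : ~~ K u -> (B *m x) u 0 = 0.
  by move=> Ku; rewrite -bil_ebasel; apply/eqP; apply: contraNT Ku; apply: x_supp.
rewrite mulmxBr mulmxA -comp_proj_mulmxC // -mulmxA mul_diag_mx.
move: (B *m x) Bx_K => y y_K; apply/matrixP => u j; rewrite ord1 !mxE.
by have [Ku | Ku] := boolP (K u); rewrite ?mul1r ?subrr // y_K // mul0r subr0.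
Qed.

Lemma bil_comp_projl y M v : in_W R r m M -> supp_in R r m v K ->
  bil R r m y (M *m v) = bil R r m (comp_proj *m y) (M *m v).
Proof.
move=> MW v_supp.
have PMv : M *m v = comp_proj *m (M *m v).
  by rewrite mulmxA comp_proj_in_W // -mulmxA comp_proj_supp.
rewrite /bil {1}PMv trmx_mul trmx_comp_proj !mulmxA -(mulmxA y^T comp_proj).
by rewrite comp_proj_mulmxC // mulmxA.
Qed.

Lemma comp_proj_eq0 z :
  (forall u x, K u -> vertex_of_type m u x -> bil R r m z x = 0) ->
  comp_proj *m z = 0.
Proof.
move=> z_perp; apply/matrixP => u j; rewrite ord1 comp_proj_entry mxE.
have [Ku | _] := boolP (K u); last by rewrite mul0r.
have [v [lam [lam_gt0 Bv v_vert]]] := fundamental_vertex_exists finW u.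
have := z_perp u v Ku v_vert; rewrite /bil -mulmxA Bv bil_ebaser.
by move/eqP; rewrite mulf_eq0 gt_eqF //= mul1r => /eqP.
Qed.

End ComponentProjection.

Section Building.
Variables (Ch : Type) (delta : Ch -> Ch -> 'M[R]_r) (n : bpoint R r Ch).
Hypotheses (finW : W_finite R m) (delta_W : forall c d, in_W R r m (delta c d)).
Hypothesis n_unit : in_chamber m n.2.

Lemma equatorialP c x : in_chamber m x ->
  equatorial m delta n (c, x) <-> bil R r m n.2 (delta n.1 c *m x) = 0.
Proof.
move=> [_ x_unit]; rewrite /equatorial /ang_dist /=; split; last by move->; exact: acos0.
have b_range : bil R r m n.2 (delta n.1 c *m x) \in `[-1, 1].
  rewrite in_itv /=; apply: (bil_unit_bound finW); first by case: n_unit.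
  by rewrite bil_in_W.
by move=> acos_pi2; rewrite -(acosK b_range) acos_pi2 cos_pihalf.
Qed.

(* The projection onto the component of [s0] kills [delta n.1 c]^-1 [n] by
   [comp_proj_eq0], hence kills [n]; so [n] is B-orthogonal to every
   W-translate of a point supported in that component. *)
Lemma horiz_factor_of_vertices c s0 :
  (forall u, cox_path m s0 u -> forall x, vertex_of_type m u x ->
     equatorial m delta n (c, x)) ->
  horiz_factor R r m Ch delta n s0.
Proof.
move=> vert_eq; set K : pred 'I_r := cox_path m s0.
have K_block : forall u v, K u != K v -> B u v = 0 := @cox_form_cross_component s0.
set M := delta n.1 c.
have MM' : M *m invmx M = 1%:M by rewrite mulmxV //; apply/in_W_unit/delta_W.
have Pn : comp_proj K *m n.2 = 0.
  have PM'n : comp_proj K *m (invmx M *m n.2) = 0.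
    apply: comp_proj_eq0 => // u x Ku x_vert.
    rewrite -(bil_in_W _ _ (delta_W n.1 c)) mulmxA MM' mul1mx.
    by apply/(equatorialP c (proj1 x_vert)); apply: vert_eq Ku _ x_vert.
  have n2E : n.2 = M *m (invmx M *m n.2) by rewrite mulmxA MM' mul1mx.
  by rewrite n2E mulmxA (comp_proj_in_W K_block (delta_W n.1 c)) -mulmxA PM'n mulmx0.
move=> c' x x_ch x_supp; apply/(equatorialP c' x_ch).
by rewrite (bil_comp_projl K_block finW) // Pn /bil trmx0 !mul0mx mxE.
Qed.

Lemma vertex_equatorial_of_face c (J : {set 'I_r}) s t :
  t \in J -> cox_path m s t -> face_in_horizontal m delta n c J ->
  forall x, vertex_of_type m s x -> equatorial m delta n (c, x).
Proof.
move=> tJ path_st face_hor x x_vert.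
have [v [lam [lam_gt0 Bv v_vert]]] := fundamental_vertex_exists finW t.
have Btv : bil R r m (e t) v != 0 by rewrite bil_ebasel Bv !mxE eqxx mulr1 gt_eqF.
have v_supp := supp_vertex (P := fun u => u \in J) v_vert tJ.
apply: (face_hor v (proj1 v_vert) v_supp t Btv c x (proj1 x_vert)).
by apply: supp_vertex x_vert _; rewrite cox_path_sym.
Qed.

End Building.
End TitsForm.

Theorem mainTheorem7 (R : realType) (r : nat) (m : 'I_r -> 'I_r -> nat)
  (Ch : Type) (delta : Ch -> Ch -> 'M[R]_r) (n : bpoint R r Ch) :
  coxeter_matrix m -> W_finite R m -> is_W_building m delta -> thick m delta ->
  in_chamber m n.2 ->
  forall (c : Ch) (J : {set 'I_r}), J != finset.set0 ->
    face_in_horizontal m delta n c J <->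
    (forall s : 'I_r, (exists2 t, t \in J & cox_path m s t) ->
       forall x : 'cV[R]_r, vertex_of_type m s x -> equatorial m delta n (c, x)).
Proof.
move=> coxm finW [delta_W _ _ _] _ n_unit c J _; split.
  move=> face_hor s [t tJ path_st].
  exact: vertex_equatorial_of_face tJ path_st face_hor.
move=> vert_eq x _ x_supp s0 Bs0; have s0J := x_supp s0 Bs0.
apply: (horiz_factor_of_vertices coxm finW delta_W n_unit (c := c)) => u path_s0u.
by apply: vert_eq; exists s0; rewrite // cox_path_sym.
Qed.
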